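(* Assume Case 3 holds. Then for every $n\ge1$ the order of $Q^n$ with respect to $z$, i.e. $\min\{i: \text{the coefficient of } z^iw^j \text{ in } Q^n \text{ is nonzero for some } j\}$, equals $\gamma_n$. Consequently $(\gamma_n,d^n)$ is the vertex of $N(Q^n)$ with minimal $x$-coordinate, and $N(Q^n)\subset\{(x,y):x\ge\gamma_n,\ x+l_2y\ge\gamma_n+l_2d^n\}$.
   Context: Let $f(z,w)=(p(z),q(z,w))$ be a holomorphic skew product germ at the origin of $\mathbb{C}^2$ with $f(0,0)=(0,0)$, where $p(z)=a_\delta z^\delta+O(z^{\delta+1})$ with $a_\delta\neq0$ and integer $\delta\ge1$, and $q(z,w)=\sum_{i+j\ge1}b_{ij}z^iw^j$ is not identically zero. For $n\ge1$ write $f^n=(p^n,Q^n)$. The Newton polygon $N(g)$ of a nonzero germ $g=\sum g_{ij}z^iw^j$ is the convex hull of $\bigcup_{g_{ij}\neq0}\{(x,y):x\ge i,\ y\ge j\}$. Let $(n_1,m_1),\dots,(n_s,m_s)$ be the vertices of $N(q)$ with $n_1<\cdots<n_s$, $m_1>\cdots>m_s$; for $1\le k\le s-1$ let $T_k$ be the $y$-intercept of the line through $(n_k,m_k)$ and $(n_{k+1},m_{k+1})$. Case 3 means: $s>1$ and $T_1\le\delta$; set $(\gamma,d)=(n_1,m_1)$ and $l_2=\frac{n_2-n_1}{m_1-m_2}$. Define $\gamma_n=\gamma(\delta^{n-1}+\delta^{n-2}d+\cdots+d^{n-1})$. *)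

From mathcomp Require Import all_boot all_order all_algebra.
From mathcomp Require Import reals.
From mathcomp.real_closed Require Export complex.
Set Implicit Arguments.
Unset Strict Implicit.
Unset Printing Implicit Defensive.
Import Order.TTheory GRing.Theory Num.Theory.
Local Open Scope ring_scope.

(* A (formal) power series in two variables z, w: g i j is the coefficient
   of z^i w^j. *)
Definition ps2 (C : Type) := nat -> nat -> C.

Section PowerSeries.
Variable C : comNzRingType.

Definition psmul (a b : ps2 C) : ps2 C := fun i j =>
  \sum_(i1 < i.+1) \sum_(j1 < j.+1) a i1 j1 * b (i - i1)%N (j - j1)%N.

Definition ps1 : ps2 C := fun i j => if (i == 0%N) && (j == 0%N) then 1 else 0.

Definition psexp (a : ps2 C) (n : nat) : ps2 C := iter n (psmul a) ps1.

(* Composition g(A(z,w), B(z,w)) for series A, B without constant term: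
   since A^k B^l has total order >= k + l, the coefficient of z^i w^j only
   involves the terms g k l with k, l <= i + j. *)
Definition pscomp (g A B : ps2 C) : ps2 C := fun i j =>
  \sum_(k < (i + j).+1) \sum_(l < (i + j).+1)
     g k l * psmul (psexp A k) (psexp B l) i j.

Definition psZ : ps2 C := fun i j => if (i == 1%N) && (j == 0%N) then 1 else 0.
Definition psW : ps2 C := fun i j => if (i == 0%N) && (j == 1%N) then 1 else 0.

Definition ps_of1 (p : nat -> C) : ps2 C := fun i j => if j == 0%N then p i else 0.

(* f^n = (p^n, Q^n) for the skew product f = (p, q); f^0 = id and
   f^(n+1) = f o f^n, i.e. (p^(n+1), Q^(n+1)) = (p(p^n), q(p^n, Q^n)). *)
Definition skew_iter (p : nat -> C) (q : ps2 C) (n : nat) : ps2 C * ps2 C :=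
  iter n (fun PQ => (pscomp (ps_of1 p) PQ.1 PQ.2, pscomp q PQ.1 PQ.2)) (psZ, psW).

Definition Qiter (p : nat -> C) (q : ps2 C) (n : nat) : ps2 C := (skew_iter p q n).2.

End PowerSeries.

(* convergence (holomorphic germ): coefficients bounded by M r^-(i+j) *)
Definition convergent1 (C : numDomainType) (p : nat -> C) : Prop :=
  exists r M : C, 0 < r /\ forall i, `|p i| * r ^+ i <= M.
Definition convergent2 (C : numDomainType) (g : ps2 C) : Prop :=
  exists r M : C, 0 < r /\ forall i j, `|g i j| * r ^+ (i + j) <= M.

(* Newton polygon: convex hull of the union over the support of the quadrants
   {(x,y) : x >= i, y >= j}; the convex hull is the set of finite convex
   combinations of points of that union. *)
Definition newton_polygon (R : realType) (C : nzRingType) (g : ps2 C) :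
    R * R -> Prop := fun P =>
  exists (n : nat) (t : 'I_n -> R) (X : 'I_n -> R * R),
    [/\ forall k, 0 <= t k,
        \sum_(k < n) t k = 1,
        forall k, exists i j, [/\ g i j != 0, i%:R <= (X k).1 & j%:R <= (X k).2],
        P.1 = \sum_(k < n) t k * (X k).1
      & P.2 = \sum_(k < n) t k * (X k).2].

Arguments newton_polygon R {C} g.

Definition is_vertex (R : realType) (S : R * R -> Prop) (P : R * R) : Prop :=
  S P /\ forall A B : R * R, forall t : R, S A -> S B -> 0 < t < 1 ->
    P = (t * A.1 + (1 - t) * B.1, t * A.2 + (1 - t) * B.2) -> A = B.

From mathcomp Require Import all_boot all_order all_algebra.
From mathcomp Require Import reals.
From mathcomp.real_closed Require Import complex.
From mathcomp Require Import zify ring lra.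
From Stdlib Require Import FunctionalExtensionality Classical.
Import Order.TTheory GRing.Theory Num.Theory.
Local Open Scope ring_scope.

(* Put a = m1 - m2 and b = n2 - n1.  The vertex list of N(q) shows that
   the support of q lies right of x = n1 and above the first edge
   a x + b y >= a n1 + b m1, and Case 3 says that (n1, m1) lies below the line
   a x + b y = b delta.  Since Q^(n+1) = q(p^n, Q^n), where p^n has z-order
   delta^n, an induction on n shows: Q^n has z-order gamma_n, satisfies the
   weighted bound a x + b y >= a gamma_n + b d^n, and its z^gamma_n-coefficient
   has w-order exactly d^n; at each step only the monomial q_(n1,m1)
   contributes to these lowest terms. *)

Set Implicit Arguments. Unset Strict Implicit.

Section WeightedOrder.
Variable C : comNzRingType.

(* [wdeg_ge a b g c]: every monomial z^i w^j in the support of g has weighted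
   degree a i + b j >= c.  With (a, b) = (1, 0) this bounds the order in z. *)
Definition wdeg_ge (a b : nat) (g : ps2 C) (c : nat) :=
  forall i j, g i j != 0 -> (c <= a * i + b * j)%N.

Lemma wdeg_ge_mul a b x y c1 c2 :
  wdeg_ge a b x c1 -> wdeg_ge a b y c2 -> wdeg_ge a b (psmul x y) (c1 + c2).
Proof.
move=> hx hy i j; apply: contraR => hlt; rewrite /psmul big1 // => i1 _.
rewrite big1 // => j1 _.
case: (eqVneq (x i1 j1) 0) => [->|/hx h1]; first by rewrite mul0r.
case: (eqVneq (y (i - i1)%N (j - j1)%N) 0) => [->|/hy h2]; first by rewrite mulr0.
exfalso; move: (ltn_ord i1) (ltn_ord j1) => l1 l2; move: hlt; rewrite -ltnNge.
rewrite !mulnBr in h2.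
have := leq_mul (leqnn a) (l1 : (i1 <= i)%N).
have := leq_mul (leqnn b) (l2 : (j1 <= j)%N).
lia.
Qed.

Lemma psexpS (A : ps2 C) k : psexp A k.+1 = psmul A (psexp A k).
Proof. by []. Qed.

Lemma wdeg_ge_exp a b A c k : wdeg_ge a b A c -> wdeg_ge a b (psexp A k) (k * c).
Proof.
move=> hA; elim: k => [|k IH] i j; first by rewrite mul0n.
by rewrite psexpS mulSn; apply: wdeg_ge_mul.
Qed.

Lemma wdeg_ge_comp a b g A B cA cB c : wdeg_ge a b A cA -> wdeg_ge a b B cB ->
  (forall k l, g k l != 0 -> (c <= k * cA + l * cB)%N) -> wdeg_ge a b (pscomp g A B) c.
Proof.
move=> hA hB hg i j; apply: contraR => hlt; rewrite /pscomp big1 // => k _.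
rewrite big1 // => l _.
case: (eqVneq (g k l) 0) => [->|/hg h1]; first by rewrite mul0r.
case: (eqVneq (psmul (psexp A k) (psexp B l) i j) 0) => [->|]; first by rewrite mulr0.
move/(wdeg_ge_mul (wdeg_ge_exp (k:=k) hA) (wdeg_ge_exp (k:=l) hB)) => h2.
by exfalso; move: hlt; rewrite -ltnNge; lia.
Qed.

(* Every series has weighted degree >= 0; this is all that is needed about the
   second argument when composing with a series p(z) independent of w. *)
Lemma wdeg_ge0 a b g : wdeg_ge a b g 0.
Proof. by []. Qed.

Definition zseries (X : ps2 C) := forall i j, j != 0%N -> X i j = 0.

Lemma zseries_mul x y : zseries x -> zseries y -> zseries (psmul x y).
Proof.
move=> hx hy i j hj; rewrite /psmul big1 // => i1 _; rewrite big1 // => j1 _.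
case: (eqVneq (nat_of_ord j1) 0%N) => [->|/hx ->]; last by rewrite mul0r.
by rewrite hy ?mulr0 // subn0.
Qed.

Lemma zseries_ps1 : zseries (ps1 C).
Proof. by move=> i j hj; rewrite /ps1 (negbTE hj) andbF. Qed.

Lemma zseries_exp A k : zseries A -> zseries (psexp A k).
Proof. by move=> hA; elim: k => [|k IH]; [exact: zseries_ps1 | exact: zseries_mul]. Qed.

Lemma zseries_comp p A B : zseries A -> zseries (pscomp (ps_of1 p) A B).
Proof.
move=> hA i j hj; rewrite /pscomp big1 // => k _; rewrite big1 // => l _.
rewrite /ps_of1; case: (eqVneq (nat_of_ord l) 0%N) => [->|_]; last by rewrite mul0r.
by rewrite zseries_mul ?mulr0 //; [exact: zseries_exp | exact: zseries_ps1].
Qed.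

Lemma wdeg_ge_zseries a b X c : zseries X -> wdeg_ge 1 0 X c -> wdeg_ge a b X (a * c).
Proof.
move=> hz hX i j hij; case: (eqVneq j 0%N) => [ej|hj]; last by rewrite hz ?eqxx in hij.
by move: (hX _ _ hij); rewrite ej; nia.
Qed.

(* [zcoef A r]: the coefficient of z^r in A, a series in w (placed at i = 0). *)
Definition zcoef (A : ps2 C) (r : nat) : ps2 C :=
  fun i j => if i == 0%N then A r j else 0.

Lemma psmul_z0 (x y : ps2 C) j :
  psmul x y 0 j = \sum_(j1 < j.+1) x 0%N j1 * y 0%N (j - j1)%N.
Proof. by rewrite /psmul big_ord1. Qed.

Lemma psmul_zlowest (x y : ps2 C) cx cy j : wdeg_ge 1 0 x cx -> wdeg_ge 1 0 y cy ->
  psmul x y (cx + cy)%N j = \sum_(j1 < j.+1) x cx j1 * y cy (j - j1)%N.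
Proof.
move=> hx hy; rewrite /psmul.
have hl : (cx < (cx + cy).+1)%N by lia.
rewrite (bigD1 (Ordinal hl)) //= [X in _ + X]big1 ?addr0; first by rewrite addKn.
move=> i1 hi1; rewrite big1 // => j1 _.
case: (eqVneq (x i1 j1) 0) => [->|/hx h1]; first by rewrite mul0r.
case: (eqVneq (y (cx + cy - i1)%N (j - j1)%N) 0) => [->|/hy h2]; first by rewrite mulr0.
exfalso; move: hi1 => /eqP; apply; apply: val_inj => /=.
have := ltn_ord i1; move: h1 h2; rewrite !mul1n !mul0n !addn0; lia.
Qed.

Lemma zcoefM A B cA cB : wdeg_ge 1 0 A cA -> wdeg_ge 1 0 B cB ->
  zcoef (psmul A B) (cA + cB) = psmul (zcoef A cA) (zcoef B cB).
Proof.
move=> hA hB; apply: functional_extensionality => i; apply: functional_extensionality => j.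
case: (eqVneq i 0%N) => [->|hi]; first by rewrite psmul_z0 /zcoef /= psmul_zlowest.
rewrite /zcoef (negbTE hi) /psmul big1 // => i1 _; rewrite big1 // => j1 _.
case: (eqVneq (nat_of_ord i1) 0%N) => [->|hi1]; last by rewrite mul0r.
by rewrite subn0 (negbTE hi) mulr0.
Qed.

Lemma zcoefX A c k : wdeg_ge 1 0 A c -> zcoef (psexp A k) (k * c) = psexp (zcoef A c) k.
Proof.
move=> hA; elim: k => [|k IH].
  apply: functional_extensionality => i; apply: functional_extensionality => j.
  by rewrite /zcoef /= /ps1; case: (i == 0%N).
by rewrite psexpS mulSn zcoefM ?IH //; apply: wdeg_ge_exp.
Qed.

(* The contribution of the monomial g_kl z^k w^l to the z^c-coefficient of
   g(A, B): only monomials with k cA + l cB = c contribute, through the lowest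
   z-coefficients of A and B. *)
Definition initial_term (g A B : ps2 C) (cA cB c j : nat) := fun k l : nat =>
  if (k * cA + l * cB == c)%N then
    g k l * psmul (psexp (zcoef A cA) k) (psexp (zcoef B cB) l) 0 j
  else 0.

Lemma pscomp_initial g A B cA cB c j : wdeg_ge 1 0 A cA -> wdeg_ge 1 0 B cB ->
  (forall k l, g k l != 0 -> (c <= k * cA + l * cB)%N) ->
  pscomp g A B c j =
    \sum_(k < (c + j).+1) \sum_(l < (c + j).+1) initial_term g A B cA cB c j k l.
Proof.
move=> hA hB hg; apply: eq_bigr => k _; apply: eq_bigr => l _; rewrite /initial_term.
case: (eqVneq (g k l) 0) => [->|gne]; first by case: ifP; rewrite ?mul0r.
have := hg _ _ gne; case: eqP => [e _|hne hle].
  rewrite -[X in psmul (psexp A k) _ X]e -(zcoefX _ hA) -(zcoefX _ hB) -zcoefM //;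
  exact: wdeg_ge_exp.
case: (eqVneq (psmul (psexp A k) (psexp B l) c j) 0) => [->|]; first by rewrite mulr0.
move/(wdeg_ge_mul (wdeg_ge_exp (k:=k) hA) (wdeg_ge_exp (k:=l) hB)); rewrite mul1n mul0n addn0 => h.
by exfalso; apply: hne; apply/eqP; rewrite eqn_leq h hle.
Qed.

Lemma zcoef_worder (X : ps2 C) r e :
  (forall j, (j < e)%N -> X r j = 0) -> wdeg_ge 0 1 (zcoef X r) e.
Proof.
move=> hX i j; rewrite /zcoef; case: ifP => _; last by rewrite eqxx.
by rewrite mul0n add0n mul1n leqNgt; apply: contra => /hX ->.
Qed.

Lemma psmul_wlowest (x y : ps2 C) e1 e2 : wdeg_ge 0 1 x e1 -> wdeg_ge 0 1 y e2 ->
  psmul x y 0 (e1 + e2)%N = x 0%N e1 * y 0%N e2.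
Proof.
move=> hx hy; rewrite psmul_z0.
have hl : (e1 < (e1 + e2).+1)%N by lia.
rewrite (bigD1 (Ordinal hl)) //= [X in _ + X]big1 ?addr0; first by rewrite addKn.
move=> j1 hj1.
case: (eqVneq (x 0%N j1) 0) => [->|/hx h1]; first by rewrite mul0r.
case: (eqVneq (y 0%N (e1 + e2 - j1)%N) 0) => [->|/hy h2]; first by rewrite mulr0.
exfalso; move: hj1 => /eqP; apply; apply: val_inj => /=.
have := ltn_ord j1; move: h1 h2; rewrite !mul1n !mul0n !add0n; lia.
Qed.

Lemma psexp_wlowest (x : ps2 C) e l :
  wdeg_ge 0 1 x e -> psexp x l 0 (l * e)%N = x 0%N e ^+ l.
Proof.
move=> hx; elim: l => [|l IH]; first by rewrite /= /ps1 expr0.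
by rewrite psexpS mulSn psmul_wlowest ?IH ?exprS //; apply: wdeg_ge_exp.
Qed.

Definition psconst (s : C) : ps2 C := fun i j => s * ps1 C i j.

Lemma psmul_const s X i j : psmul (psconst s) X i j = s * X i j.
Proof.
rewrite /psmul big_ord_recl [X in _ + X]big1 ?addr0; last first.
  by move=> i1 _; rewrite big1 // => j1 _; rewrite /psconst /ps1 /= !mulr0 mul0r.
rewrite big_ord_recl [X in _ + X]big1 ?addr0; first by rewrite /psconst /ps1 /= mulr1 !subn0.
by move=> j1 _; rewrite /psconst /ps1 /= mulr0 mul0r.
Qed.

Lemma psexp_const s k : psexp (psconst s) k = psconst (s ^+ k).
Proof.
apply: functional_extensionality => i; apply: functional_extensionality => j.
elim: k i j => [|k IH] i j; first by rewrite /psconst /= mul1r.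
by rewrite psexpS psmul_const IH /psconst exprS mulrA.
Qed.

Lemma zcoef_zseries (X : ps2 C) c : zseries X -> zcoef X c = psconst (X c 0%N).
Proof.
move=> hz; apply: functional_extensionality => i; apply: functional_extensionality => j.
rewrite /zcoef /psconst /ps1; case: i => [|i] /=; last by rewrite mulr0.
by case: j => [|j] /=; [rewrite mulr1 | rewrite hz // mulr0].
Qed.

Lemma sum2_single N (F : nat -> nat -> C) k0 l0 : (k0 < N)%N -> (l0 < N)%N ->
  (forall k l, (k < N)%N -> (l < N)%N -> (k != k0) || (l != l0) -> F k l = 0) ->
  \sum_(k < N) \sum_(l < N) F k l = F k0 l0.
Proof.
move=> hk hl hF; rewrite (bigD1 (Ordinal hk)) //= [X in _ + X]big1 ?addr0.
  rewrite (bigD1 (Ordinal hl)) //= [X in _ + X]big1 ?addr0 // => l hne; apply: hF => //.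
  by apply/orP; right; apply: contra hne => /eqP he; apply/eqP/val_inj.
move=> k hne; rewrite big1 // => l _; apply: hF => //.
by apply/orP; left; apply: contra hne => /eqP he; apply/eqP/val_inj.
Qed.

End WeightedOrder.

Fixpoint gamma_seq (gam delta d n : nat) : nat :=
  if n is n'.+1 then (gam * delta ^ n' + d * gamma_seq gam delta d n')%N else 0%N.

Lemma gamma_seq_sum gam delta d n :
  gamma_seq gam delta d n = (gam * \sum_(k < n) delta ^ (n.-1 - k) * d ^ k)%N.
Proof.
elim: n => [|n IH]; first by rewrite big_ord0 muln0.
rewrite /= IH big_ord_recl /= subn0 expn0 muln1 mulnDr; congr (_ + _)%N.
rewrite mulnCA; congr (_ * _)%N; rewrite big_distrr /=; apply: eq_bigr => k _.
rewrite /bump /= add1n expnS mulnCA; congr (_ * (_ * _))%N; congr (_ ^ _)%N; lia.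
Qed.

Lemma gamma_seq_case3 gam delta d a b n : (gam * a + d * b <= delta * b)%N ->
  (gamma_seq gam delta d n * a + d ^ n * b <= delta ^ n * b)%N.
Proof.
move=> hc; elim: n => [|n IH] /=; first by rewrite expn0 mul1n.
set Gn := gamma_seq gam delta d n; rewrite !expnS.
have -> : ((gam * delta ^ n + d * Gn) * a + d * d ^ n * b
           = delta ^ n * (gam * a) + d * (Gn * a + d ^ n * b))%N by ring.
have : (d * (Gn * a + d ^ n * b) <= d * (delta ^ n * b))%N by rewrite leq_mul2l IH orbT.
have : (delta ^ n * (gam * a + d * b) <= delta ^ n * (delta * b))%N.
  by rewrite leq_mul2l hc orbT.
nia.
Qed.

Lemma zorder_step_bound (a b gam d D e G k l : nat) :
  (0 < a)%N -> (0 < b)%N -> (1 <= D)%N -> (1 <= e)%N ->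
  (G * a + e * b <= D * b)%N -> (gam <= k)%N -> (a * gam + b * d <= a * k + b * l)%N ->
  (gam * D + d * G <= k * D + l * G)%N /\
  ((gam * D + d * G == k * D + l * G)%N -> k = gam /\ (d <= l)%N).
Proof.
move=> ha hb hD he hK hk hH.
have [x ek] : exists x, k = (gam + x)%N by exists (k - gam)%N; lia.
subst k; case: (leqP d l) => hdl.
  have [y el] : exists y, l = (d + y)%N by exists (l - d)%N; lia.
  subst l; rewrite ?mulnDl ?mulnDr in hH *.
  have : (x <= x * D)%N by rewrite leq_pmulr.
  lia.
(* l = d - (y + 1): lowering by y + 1 in w forces a shift x with b (y+1) <= a x,
   and since (G, e) lies strictly left of the line, (y + 1) G < x D *)
have [y ey] : exists y, d = (l + y.+1)%N by exists (d - l).-1; lia.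
subst d; rewrite ?mulnDl ?mulnDr in hH *.
have shift : (b * y.+1 * D <= a * x * D)%N by rewrite leq_mul2r; apply/orP; right; lia.
have line : (y.+1 * (G * a + e * b) <= y.+1 * (D * b))%N by rewrite leq_mul2l hK orbT.
have scaled : (y.+1 * G * a < a * x * D)%N.
  rewrite !mulnDr in line; have : (1 <= y.+1 * e * b)%N by rewrite !muln_gt0 /=; lia.
  lia.
have gain : (y.+1 * G < x * D)%N.
  rewrite ltnNge; apply/negP => hc; have := leq_mul2l a (x * D) (y.+1 * G); rewrite hc orbT.
  lia.
lia.
Qed.

Lemma weight_step_bound (a b gam d D e G k l : nat) : (0 < a)%N -> (0 < b)%N ->
  (G * a + e * b <= D * b)%N -> (gam <= k)%N -> (a * gam + b * d <= a * k + b * l)%N ->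
  (a * (gam * D + d * G) + b * (d * e) <= k * (a * D) + l * (a * G + b * e))%N.
Proof.
move=> ha hb hK hk hH.
have [x ek] : exists x, k = (gam + x)%N by exists (k - gam)%N; lia.
subst k; case: (leqP d l) => hdl.
  have [y el] : exists y, l = (d + y)%N by exists (l - d)%N; lia.
  subst l; nia.
have [y ey] : exists y, d = (l + y.+1)%N by exists (d - l).-1; lia.
subst d.
have shift : (b * y.+1 * D <= a * x * D)%N by rewrite leq_mul2r; apply/orP; right; lia.
have line : (y.+1 * (G * a + e * b) <= y.+1 * (D * b))%N by rewrite leq_mul2l hK orbT.
nia.
Qed.

Section Iteration.
Variable C : idomainType.
Variables (p : nat -> C) (q : ps2 C) (delta : nat).
Hypotheses (delta_ge1 : (1 <= delta)%N) (p_low : forall k, (k < delta)%N -> p k = 0)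
  (p_lead : p delta != 0).

Let P n := (skew_iter p q n).1.
Let Q n := (skew_iter p q n).2.

Lemma ps_of1_support k l : ps_of1 p k l != 0 -> l = 0%N /\ (delta <= k)%N.
Proof.
rewrite /ps_of1; case: (eqVneq l 0%N) => [-> hk|]; last by rewrite eqxx.
by split => //; rewrite leqNgt; apply: contra hk => /p_low ->.
Qed.

Lemma base_iter n :
  [/\ zseries (P n), wdeg_ge 1 0 (P n) (delta ^ n)%N & P n (delta ^ n)%N 0%N != 0].
Proof.
elim: n => [|n [Pz Pord Plead]].
  rewrite /P /= expn0; split => [i j hj | i j | ]; rewrite /psZ ?(negbTE hj) ?andbF //.
    by case: (i =P 1%N) => [-> _|_]; [lia | rewrite andFb eqxx].
  by rewrite /= oner_eq0.
have ePS : P n.+1 = pscomp (ps_of1 p) (P n) (Q n) by [].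
have hc k l : ps_of1 p k l != 0 -> (delta ^ n.+1 <= k * delta ^ n + l * 0)%N.
  by case/ps_of1_support => _ hk; rewrite muln0 addn0 expnS leq_mul2r hk orbT.
rewrite ePS; split; first exact: zseries_comp.
  exact: wdeg_ge_comp Pord (@wdeg_ge0 _ 1 0 (Q n)) hc.
have hD : (delta <= delta ^ n.+1)%N by rewrite expnS leq_pmulr // expn_gt0 delta_ge1.
rewrite (pscomp_initial _ Pord (@wdeg_ge0 _ 1 0 (Q n)) hc).
rewrite (sum2_single (k0 := delta) (l0 := 0)); [| lia | lia |].
- rewrite /initial_term mul0n addn0 -expnS eqxx (zcoef_zseries _ Pz) psexp_const.
  by rewrite psmul_const /= /ps1 /= mulr1 mulf_neq0 // expf_neq0.
- move=> k l _ _ hne; rewrite /initial_term; case: eqP => // he.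
  case: (eqVneq (ps_of1 p k l) 0) => [->|/ps_of1_support [el hk]]; first by rewrite mul0r.
  move: he hne; rewrite el muln0 addn0 expnS => /eqP; rewrite eqn_pmul2r ?expn_gt0 ?delta_ge1 //.
  by move=> /eqP ->; rewrite !eqxx.
Qed.

Variables (gam d a b : nat).
Hypotheses (a_gt0 : (0 < a)%N) (b_gt0 : (0 < b)%N) (d_ge1 : (1 <= d)%N)
  (case3 : (gam * a + d * b <= delta * b)%N)
  (q_vertex : q gam d != 0)
  (q_right : forall k l, q k l != 0 -> (gam <= k)%N)
  (q_above : forall k l, q k l != 0 -> (a * gam + b * d <= a * k + b * l)%N).

Let G n := gamma_seq gam delta d n.

Section Step.
Variable n : nat.
Let D := (delta ^ n)%N.
Let e := (d ^ n)%N.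
Hypotheses (Q_zorder : wdeg_ge 1 0 (Q n) (G n))
  (Q_weight : wdeg_ge a b (Q n) (a * G n + b * e)%N)
  (Q_low : forall j, (j < e)%N -> Q n (G n) j = 0).

Let D_ge1 : (1 <= D)%N. Proof. by rewrite expn_gt0; lia. Qed.
Let e_ge1 : (1 <= e)%N. Proof. by rewrite expn_gt0; lia. Qed.
Let below_line : (G n * a + e * b <= D * b)%N. Proof. exact: gamma_seq_case3. Qed.

Lemma Q_step_eq : Q n.+1 = pscomp q (P n) (Q n).
Proof. by []. Qed.

Lemma Q_step_supp_bound k l : q k l != 0 -> (G n.+1 <= k * D + l * G n)%N.
Proof. by move=> hkl; case: (zorder_step_bound a_gt0 b_gt0 D_ge1 e_ge1 below_line
  (q_right hkl) (q_above hkl)). Qed.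

Lemma Q_step_zorder : wdeg_ge 1 0 (Q n.+1) (G n.+1).
Proof.
have [_ Pord _] := base_iter n.
by rewrite Q_step_eq; apply: wdeg_ge_comp Pord Q_zorder _ => k l /Q_step_supp_bound.
Qed.

Lemma Q_step_weight : wdeg_ge a b (Q n.+1) (a * G n.+1 + b * d ^ n.+1)%N.
Proof.
have [Pz Pord _] := base_iter n.
rewrite Q_step_eq; apply: (wdeg_ge_comp (wdeg_ge_zseries a b Pz Pord) Q_weight) => k l hkl.
rewrite /G /= expnS; exact: weight_step_bound a_gt0 b_gt0 below_line (q_right hkl) (q_above hkl).
Qed.

Lemma Q_step_initial_support k l j : (j <= d ^ n.+1)%N ->
  initial_term q (P n) (Q n) D (G n) (G n.+1) j k l != 0 ->
  [/\ k = gam, l = d & j = (d ^ n.+1)%N].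
Proof.
move=> hj; rewrite /initial_term; case: ifP => [/eqP he|_]; last by rewrite eqxx.
have [Pz _ _] := base_iter n.
rewrite (zcoef_zseries _ Pz) psexp_const psmul_const !mulf_eq0 !negb_or.
case/and3P => [hkl _ hps].
have [_ hq] := zorder_step_bound a_gt0 b_gt0 D_ge1 e_ge1 below_line (q_right hkl) (q_above hkl).
have [ek hl] : k = gam /\ (d <= l)%N by apply: hq; rewrite he.
have := wdeg_ge_exp (k := l) (zcoef_worder Q_low) hps; rewrite mul0n add0n mul1n => hlj.
have hld : (l * e <= d * e)%N by apply: leq_trans hlj _; rewrite -expnS.
rewrite leq_pmul2r // in hld.
have el : l = d by apply/eqP; rewrite eqn_leq hld hl.
by split => //; subst l; apply/eqP; rewrite eqn_leq hj expnS.
Qed.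

Lemma Q_step_low j : (j < d ^ n.+1)%N -> Q n.+1 (G n.+1) j = 0.
Proof.
have [_ Pord _] := base_iter n.
move=> hj; rewrite Q_step_eq (pscomp_initial _ Pord Q_zorder Q_step_supp_bound).
rewrite big1 // => k _; rewrite big1 // => l _; apply/eqP; apply: contraT => hne.
by have [_ _ ej] := Q_step_initial_support (ltnW hj) hne; rewrite ej ltnn in hj.
Qed.

Lemma Q_step_lead :
  Q n.+1 (G n.+1) (d ^ n.+1)%N = q gam d * (P n D 0%N ^+ gam * Q n (G n) e ^+ d).
Proof.
have [Pz Pord _] := base_iter n.
rewrite Q_step_eq (pscomp_initial _ Pord Q_zorder Q_step_supp_bound).
rewrite (sum2_single (k0 := gam) (l0 := d)).
- rewrite /initial_term /= eqxx (zcoef_zseries _ Pz) psexp_const psmul_const expnS.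
  by rewrite (psexp_wlowest _ (zcoef_worder Q_low)) /zcoef.
- have : (gam <= gam * D)%N by rewrite leq_pmulr.
  by rewrite /G /=; lia.
- have : (d <= d ^ n.+1)%N by rewrite expnS leq_pmulr.
  lia.
- move=> k l _ _ hne; apply/eqP; apply: contraT => hnz.
  by have [ek el _] := Q_step_initial_support (leqnn _) hnz; rewrite ek el !eqxx in hne.
Qed.

End Step.

Lemma fiber_iter n :
  [/\ wdeg_ge 1 0 (Q n) (G n), wdeg_ge a b (Q n) (a * G n + b * d ^ n)%N,
      forall j, (j < d ^ n)%N -> Q n (G n) j = 0 & Q n (G n) (d ^ n)%N != 0].
Proof.
elim: n => [|n [Qord Qw Qlow Qlead]].
  rewrite /Q /G /= expn0; split => [i j | i j | j | ]; rewrite /psW ?oner_eq0 //.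
    by case: ifP => [/andP[/eqP -> /eqP ->] _|]; [lia | rewrite eqxx].
  by rewrite ltnS leqn0 => /eqP ->.
have [_ _ Plead] := base_iter n.
split; [exact: Q_step_zorder | exact: Q_step_weight | exact: Q_step_low | ].
by rewrite Q_step_lead // !mulf_neq0 // expf_neq0.
Qed.

End Iteration.

Lemma convex_eq_min (R : realFieldType) (t x y c : R) : 0 < t -> t < 1 ->
  c <= x -> c <= y -> c = t * x + (1 - t) * y -> x = c /\ y = c.
Proof. by move=> h0 h1 hx hy he; split; nra. Qed.

Lemma solve2_homogeneous (R : fieldType) (u v u2 v2 x y : R) : u * v2 - v * u2 != 0 ->
  u * x + v * y = 0 -> u2 * x + v2 * y = 0 -> x = 0 /\ y = 0.
Proof.
move=> hdet h1 h2.
have ex : (u * v2 - v * u2) * x = v2 * (u * x + v * y) - v * (u2 * x + v2 * y) by ring.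
have ey : (u * v2 - v * u2) * y = u * (u2 * x + v2 * y) - u2 * (u * x + v * y) by ring.
rewrite h1 h2 !mulr0 subrr in ex ey.
by move/eqP: ex; move/eqP: ey; rewrite !mulf_eq0 (negbTE hdet) /= => /eqP -> /eqP ->.
Qed.

Section NewtonPolygon.
Variables (R : realType) (C : nzRingType) (g : ps2 C).
Notation NP := (newton_polygon R g).

Lemma np_quadrant i j (x y : R) : g i j != 0 -> i%:R <= x -> j%:R <= y -> NP (x, y).
Proof.
move=> hg hx hy; exists 1%N, (fun _ => 1), (fun _ => (x, y)); split.
- by move=> _; rewrite ler01.
- by rewrite big_ord1.
- by move=> _; exists i, j.
- by rewrite big_ord1 mul1r.
- by rewrite big_ord1 mul1r.
Qed.

Lemma np_segment i1 j1 i2 j2 (s : R) : g i1 j1 != 0 -> g i2 j2 != 0 -> 0 <= s <= 1 ->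
  NP ((1 - s) * i1%:R + s * i2%:R, (1 - s) * j1%:R + s * j2%:R).
Proof.
move=> h1 h2 /andP [s0 s1].
exists 2%N, (fun k => if k == ord0 then 1 - s else s),
  (fun k => if k == ord0 then (i1%:R, j1%:R) else (i2%:R, j2%:R)); split.
- by move=> k; case: ifP => _ //; rewrite subr_ge0.
- by rewrite big_ord_recl big_ord1 /=; ring.
- by move=> k; case: ifP => _; [exists i1, j1 | exists i2, j2].
- by rewrite big_ord_recl big_ord1 /=.
- by rewrite big_ord_recl big_ord1 /=.
Qed.

Lemma np_halfplane (u v c : R) P : 0 <= u -> 0 <= v ->
  (forall i j, g i j != 0 -> c <= u * i%:R + v * j%:R) -> NP P -> c <= u * P.1 + v * P.2.
Proof.
move=> hu hv hc [n [t [X [t0 t1 hX -> ->]]]].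
rewrite !mulr_sumr -big_split /=.
have -> : c = \sum_(k < n) t k * c by rewrite -mulr_suml t1 mul1r.
apply: ler_sum => k _; rewrite mulrCA (mulrCA v) -mulrDr ler_wpM2l //.
have [i [j [hg hi hj]]] := hX k.
by apply: (le_trans (hc _ _ hg)); apply: lerD; exact: ler_wpM2l.
Qed.

Lemma np_face (u v c u2 v2 c2 : R) P : 0 <= u -> 0 <= v -> 0 <= u2 -> 0 <= v2 ->
  (forall i j, g i j != 0 -> c <= u * i%:R + v * j%:R) ->
  (forall i j, g i j != 0 -> u * i%:R + v * j%:R = c -> c2 <= u2 * i%:R + v2 * j%:R) ->
  NP P -> u * P.1 + v * P.2 = c -> c2 <= u2 * P.1 + v2 * P.2.
Proof.
move=> hu hv hu2 hv2 hc hc2 [n [t [X [t0 t1 hX -> ->]]]] /=.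
have lbX k : c <= u * (X k).1 + v * (X k).2.
  have [i [j [hg hi hj]]] := hX k.
  by apply: (le_trans (hc _ _ hg)); apply: lerD; exact: ler_wpM2l.
rewrite !mulr_sumr -big_split /= => hsum.
have hz k : t k * (u * (X k).1 + v * (X k).2 - c) = 0.
  have h0 : \sum_(k < n) t k * (u * (X k).1 + v * (X k).2 - c) = 0.
    rewrite (eq_bigr (fun k => (u * (t k * (X k).1) + v * (t k * (X k).2)) - t k * c));
      last by move=> k' _; ring.
    by rewrite sumrB hsum -mulr_suml t1 mul1r subrr.
  move/eqP: h0; rewrite psumr_eq0 => [/allP hall|k' _].
    by apply/eqP; apply: hall; rewrite mem_index_enum.
  by apply: mulr_ge0 => //; rewrite subr_ge0.
rewrite -big_split /=.
have -> : c2 = \sum_(k < n) t k * c2 by rewrite -mulr_suml t1 mul1r.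
apply: ler_sum => k _.
move/eqP: (hz k); rewrite mulf_eq0 => /orP [/eqP -> | hk]; first by rewrite !(mul0r, mulr0, addr0).
rewrite mulrCA (mulrCA v2) -mulrDr ler_wpM2l //.
have [i [j [hg hi hj]]] := hX k.
have e : u * i%:R + v * j%:R = c.
  apply/le_anti; rewrite hc // andbT.
  by move: hk; rewrite subr_eq0 => /eqP <-; apply: lerD; exact: ler_wpM2l.
by apply: (le_trans (hc2 _ _ hg e)); apply: lerD; exact: ler_wpM2l.
Qed.

Lemma vertex_midpoint P A B : is_vertex NP P -> NP A -> NP B ->
  P.1 = (A.1 + B.1) / 2 -> P.2 = (A.2 + B.2) / 2 -> A = B.
Proof.
move=> [_ hv] hA hB e1 e2; apply: (hv A B (2^-1) hA hB).
  by apply/andP; split; [rewrite invr_gt0 | rewrite invf_lt1]; lra.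
case: P e1 e2 {hv} => [x y] /= -> ->.
by congr (_, _); field.
Qed.

Lemma np_vertex_of_faces (u v u2 v2 : R) i0 j0 : 0 <= u -> 0 <= v -> 0 <= u2 -> 0 <= v2 ->
  u * v2 - v * u2 != 0 -> g i0 j0 != 0 ->
  (forall i j, g i j != 0 -> u * i0%:R + v * j0%:R <= u * i%:R + v * j%:R) ->
  (forall i j, g i j != 0 -> u * i%:R + v * j%:R = u * i0%:R + v * j0%:R ->
      u2 * i0%:R + v2 * j0%:R <= u2 * i%:R + v2 * j%:R) ->
  is_vertex NP (i0%:R, j0%:R).
Proof.
move=> hu hv hu2 hv2 hdet hg hc hc2; split; first exact: (np_quadrant hg).
move=> [a1 a2] [b1 b2] t hA hB /andP [t0 t1] [e1 e2].
have lA := np_halfplane hu hv hc hA; have lB := np_halfplane hu hv hc hB.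
have mixA : u * i0%:R + v * j0%:R = t * (u * a1 + v * a2) + (1 - t) * (u * b1 + v * b2).
  by rewrite e1 e2; ring.
have [/= fA fB] := convex_eq_min t0 t1 lA lB mixA.
have lA2 := np_face hu hv hu2 hv2 hc hc2 hA fA.
have lB2 := np_face hu hv hu2 hv2 hc hc2 hB fB.
have mixB : u2 * i0%:R + v2 * j0%:R =
    t * (u2 * a1 + v2 * a2) + (1 - t) * (u2 * b1 + v2 * b2) by rewrite e1 e2; ring.
have [/= gA gB] := convex_eq_min t0 t1 lA2 lB2 mixB.
(* (a1 - b1, a2 - b2) solves the homogeneous system of the two forms *)
have hx : u * (a1 - b1) + v * (a2 - b2) = 0.
  by rewrite -(subrr (u * i0%:R + v * j0%:R)) -{1}fA -fB; ring.
have hy : u2 * (a1 - b1) + v2 * (a2 - b2) = 0.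
  by rewrite -(subrr (u2 * i0%:R + v2 * j0%:R)) -{1}gA -gB; ring.
have [/eqP x0 /eqP y0] := solve2_homogeneous hdet hx hy.
by move: x0 y0; rewrite !subr_eq0 => /eqP -> /eqP ->.
Qed.

Lemma np_leftmost_vertex i0 j0 : g i0 j0 != 0 -> (forall i j, g i j != 0 -> (i0 <= i)%N) ->
  (forall j, g i0 j != 0 -> (j0 <= j)%N) ->
  forall P, is_vertex NP P -> P <> (i0%:R, j0%:R) -> i0%:R < P.1.
Proof.
move=> hg hi hj [x y] hV hne; have hP := hV.1.
have hc i j : g i j != 0 -> i0%:R <= 1 * i%:R + 0 * j%:R :> R.
  by move/hi; rewrite mul1r mul0r addr0 ler_nat.
have := np_halfplane ler01 (lexx 0) hc hP; rewrite /= mul1r mul0r addr0.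
rewrite le_eqVlt => /orP [/eqP ex|//]; exfalso.
have hc2 i j : g i j != 0 -> 1 * i%:R + 0 * j%:R = i0%:R :> R ->
    j0%:R <= 0 * i%:R + 1 * j%:R :> R.
  move=> hij; rewrite !(mul1r, mul0r, addr0, add0r) ler_nat => /eqP; rewrite eqr_nat.
  by move=> /eqP ei; subst i; apply: hj.
have := np_face ler01 (lexx 0) (lexx 0) ler01 hc hc2 hP.
rewrite /= !(mul1r, mul0r, addr0, add0r) => /(_ (esym ex)).
rewrite le_eqVlt => /orP [/eqP ey|lty]; first by apply: hne; rewrite -ex -ey.
(* otherwise (x, y) is the midpoint of (i0, j0) and (i0, 2 y - j0) *)
have hA : NP (i0%:R, j0%:R) by apply: (np_quadrant hg).
have hB : NP (i0%:R, 2 * y - j0%:R) by apply: (np_quadrant hg) => //; lra.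
have mx : x = (i0%:R + i0%:R) / 2 :> R by rewrite -ex; field.
have my : y = (j0%:R + (2 * y - j0%:R)) / 2 :> R by field.
have := congr1 snd (vertex_midpoint hV hA hB mx my).
by move: lty => /=; move: (j0%:R : R) => z; lra.
Qed.

Lemma np_peel n (t : 'I_n -> R) (X : 'I_n -> R * R) k :
  (forall l, 0 <= t l) -> \sum_(l < n) t l = 1 ->
  (forall l, exists i j, [/\ g i j != 0, i%:R <= (X l).1 & j%:R <= (X l).2]) ->
  t k < 1 ->
  exists2 B, NP B &
    (\sum_(l < n) t l * (X l).1, \sum_(l < n) t l * (X l).2) =
    (t k * (X k).1 + (1 - t k) * B.1, t k * (X k).2 + (1 - t k) * B.2).
Proof.
move=> t0 t1 hX tk1.
have hnz : 1 - t k != 0 by rewrite subr_eq0 eq_sym lt_eqF.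
pose t' l := if l == k then 0 else t l / (1 - t k).
have hsum' (F : 'I_n -> R) :
    \sum_(l < n) t l * F l = t k * F k + (1 - t k) * \sum_(l < n) t' l * F l.
  rewrite (bigD1 k) //= [in RHS](bigD1 k) //= /t' eqxx mul0r add0r mulr_sumr.
  by congr (_ + _); apply: eq_bigr => l hl; rewrite (negbTE hl); field.
exists (\sum_(l < n) t' l * (X l).1, \sum_(l < n) t' l * (X l).2); last by rewrite !hsum'.
exists n, t', X; split => //.
- by move=> l; rewrite /t'; case: ifP => _ //; apply: divr_ge0 => //; rewrite subr_ge0 ltW.
- have hs : \sum_(l < n | l != k) t l = 1 - t k.
    by rewrite -t1 [in RHS](bigD1 k) //= addrAC subrr add0r.
  apply: (mulfI hnz); rewrite mulr1 -[RHS]hs (bigD1 k) //= /t' eqxx add0r mulr_sumr.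
  by apply: eq_bigr => l hl; rewrite (negbTE hl); field.
Qed.

Lemma vertex_in_quadrant P : is_vertex NP P ->
  exists i j, [/\ g i j != 0, i%:R <= P.1 & j%:R <= P.2].
Proof.
move=> hV; have [[n [t [X [t0 t1 hX e1 e2]]]] hv] := hV.
have [k tk_gt0] : exists k, 0 < t k.
  case: (pickP (fun k => 0 < t k)) => [k hk | hall]; first by exists k.
  exfalso; move: t1; rewrite big1 => [|k _]; first by move/eqP; rewrite eq_sym oner_eq0.
  by apply/le_anti; rewrite t0 andbT leNgt; move: (hall k) => /= ->.
suff -> : P = X k by apply: hX.
have eP : P = (\sum_(l < n) t l * (X l).1, \sum_(l < n) t l * (X l).2).
  by rewrite -e1 -e2; case: P {hV hv e1 e2}.
have tk_le1 : t k <= 1.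
  by rewrite -t1 (bigD1 k) //= lerDl; apply: sumr_ge0 => l _; exact: t0.
case: (eqVneq (t k) 1) => [tk1|tk1].
  have hs0 : \sum_(l < n | l != k) t l = 0.
    by apply: (@addrI _ 1); rewrite addr0 -[X in _ = X]t1 [in RHS](bigD1 k) //= tk1.
  have hz l : l != k -> t l = 0.
    move=> hl; move/eqP: hs0; rewrite psumr_eq0 => [/allP /(_ l (mem_index_enum _))|l' _].
      by rewrite hl => /eqP.
    exact: t0.
  have hsumk (F : 'I_n -> R) : \sum_(l < n) t l * F l = F k.
    by rewrite (bigD1 k) //= big1 ?tk1 ?mul1r ?addr0 // => l hl; rewrite hz // mul0r.
  by rewrite eP (hsumk (fun l => (X l).1)) (hsumk (fun l => (X l).2)); case: (X k).
have tk_lt1 : t k < 1 by rewrite lt_neqAle tk1 tk_le1.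
have [B hB eB] := np_peel (k := k) t0 t1 hX tk_lt1.
have hXk : NP (X k) by have [i [j [hg hi hj]]] := hX k; case: (X k) hi hj => x y;
  exact: (np_quadrant hg).
have htk : 0 < t k < 1 by rewrite tk_gt0 tk_lt1.
have eXB := hv (X k) B (t k) hXk hB htk (etrans eP eB).
by rewrite eP eB eXB; case: (B) => x y /=; congr (_, _); ring.
Qed.

Lemma vertex_corner P i j : is_vertex NP P -> g i j != 0 ->
  i%:R <= P.1 -> j%:R <= P.2 -> P = (i%:R, j%:R).
Proof.
case: P => x y hV hg /= hi hj.
have ex : x = i%:R.
  apply/eqP; rewrite eq_le hi andbT leNgt; apply/negP => hlt.
  have hA : NP (i%:R, y) by apply: (np_quadrant hg).
  have hB : NP (2 * x - i%:R, y) by apply: (np_quadrant hg) => //; lra.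
  have mx : x = (i%:R + (2 * x - i%:R)) / 2 by field.
  have my : y = (y + y) / 2 by field.
  by move: (congr1 fst (vertex_midpoint hV hA hB mx my)) hlt => /= h1 h2; lra.
have ey : y = j%:R.
  apply/eqP; rewrite eq_le hj andbT leNgt; apply/negP => hlt.
  have hA : NP (x, j%:R) by apply: (np_quadrant hg).
  have hB : NP (x, 2 * y - j%:R) by apply: (np_quadrant hg) => //; lra.
  have mx : x = (x + x) / 2 by field.
  have my : y = (j%:R + (2 * y - j%:R)) / 2 by field.
  by move: (congr1 snd (vertex_midpoint hV hA hB mx my)) hlt => /= h1 h2; lra.
by rewrite ex ey.
Qed.

Lemma np_vertex_support P : is_vertex NP P -> exists i j, g i j != 0 /\ P = (i%:R, j%:R).
Proof.
move=> hV; have [i [j [hg hi hj]]] := vertex_in_quadrant hV.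
by exists i, j; split => //; apply: vertex_corner.
Qed.

Lemma vertex_not_over_chord (x0 y0 x1 y1 xa ya : nat) (u v : R) : 0 < u -> 0 < v ->
  g x0 y0 != 0 -> g x1 y1 != 0 -> g xa ya != 0 -> is_vertex NP (x1%:R, y1%:R) ->
  (x0 < x1)%N -> (x1 < xa)%N ->
  u * x1%:R + v * y1%:R = u * x0%:R + v * y0%:R ->
  u * xa%:R + v * ya%:R < u * x0%:R + v * y0%:R -> False.
Proof.
move=> hu hv h0 h1 ha hV1; rewrite -!(ltr_nat R).
set X0 := x0%:R; set X1 := x1%:R; set XA := xa%:R.
set Y0 := y0%:R; set Y1 := y1%:R; set YA := ya%:R => r01 r1a e1 lt.
(* the point of the chord [(x0,y0), (xa,ya)] above x1 lies strictly below (x1, y1) *)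
pose s := (X1 - X0) / (XA - X0).
have s0 : 0 < s by apply: divr_gt0; lra.
have s1 : s < 1 by rewrite /s ltr_pdivrMr; lra.
have s01 : 0 <= s <= 1 by apply/andP; split; lra.
have hQ := np_segment h0 ha s01.
have hQx : (1 - s) * X0 + s * XA = X1 by rewrite /s; field; lra.
set Qy := (1 - s) * Y0 + s * YA in hQ.
have hpsi : u * X1 + v * Qy = (u * X0 + v * Y0) - s * ((u * X0 + v * Y0) - (u * XA + v * YA)).
  by rewrite -hQx /Qy; ring.
have hpos : 0 < s * ((u * X0 + v * Y0) - (u * XA + v * YA)) by apply: mulr_gt0 => //; lra.
have hQy : v * Qy < v * Y1 by lra.
rewrite ltr_pM2l // in hQy.
have hB : NP (X1, 2 * Y1 - Qy) by apply: (np_quadrant h1) => //; lra.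
have mx : X1 = ((1 - s) * X0 + s * XA + X1) / 2 by rewrite hQx; field.
have my : Y1 = (Qy + (2 * Y1 - Qy)) / 2 by field.
have := congr1 snd (vertex_midpoint hV1 hQ hB mx my).
by rewrite /=; lra.
Qed.

Lemma np_left_vertex_face (G e : nat) (l : R) : 0 <= l -> g G e != 0 ->
  (forall i j, g i j != 0 -> (G <= i)%N) -> (forall j, (j < e)%N -> g G j = 0) ->
  (forall i j, g i j != 0 -> G%:R + l * e%:R <= i%:R + l * j%:R) ->
  (is_vertex NP (G%:R, e%:R) /\
     forall P, is_vertex NP P -> P <> (G%:R, e%:R) -> G%:R < P.1) /\
  (forall P, NP P -> G%:R <= P.1 /\ G%:R + l * e%:R <= P.1 + l * P.2).
Proof.
move=> hl hg hG hlow hface.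
have hcol j : g G j != 0 -> (e <= j)%N.
  by move=> hj; rewrite leqNgt; apply: contra hj => /hlow ->.
have hx i j : g i j != 0 -> G%:R <= 1 * i%:R + 0 * j%:R :> R.
  by move/hG; rewrite mul1r mul0r addr0 ler_nat.
split; [split|].
- apply: (np_vertex_of_faces (u := 1) (v := 0) (u2 := 0) (v2 := 1)); rewrite ?ler01 ?lexx //.
  + by rewrite !(mul1r, mul0r, mulr1, subr0) oner_eq0.
  + by move=> i j /hx; rewrite !mul1r !mul0r !addr0.
  + move=> i j hij; rewrite !(mul1r, mul0r, addr0, add0r) => /eqP; rewrite eqr_nat.
    by move=> /eqP ei; subst i; rewrite ler_nat; exact: hcol.
- exact: np_leftmost_vertex.
- move=> P hP; split.
    by have := np_halfplane ler01 (lexx 0) hx hP; rewrite mul1r mul0r addr0.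
  have := np_halfplane ler01 hl (c := G%:R + l * e%:R) _ hP; rewrite mul1r; apply.
  by move=> i j; rewrite mul1r; exact: hface.
Qed.

End NewtonPolygon.

Lemma natr_pair_inj (R : realType) (i j x y : nat) :
  ((i%:R, j%:R) : R * R) = (x%:R, y%:R) -> i = x /\ j = y.
Proof. by case=> /eqP + /eqP; rewrite !eqr_nat => /eqP -> /eqP ->. Qed.

Lemma least_nat (P : nat -> Prop) :
  (exists n, P n) -> exists n, P n /\ forall m, P m -> (n <= m)%N.
Proof.
move=> [n hn]; elim/ltn_ind: n hn => n IH hn.
case: (classic (exists m, P m /\ (m < n)%N)) => [[m [hm hlt]]|hno]; first exact: IH hm.
by exists n; split => // m hm; rewrite leqNgt; apply/negP => hlt; apply: hno; exists m.
Qed.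

Section VertexList.
Variables (R : realType) (C : nzRingType) (q : ps2 C) (vs : seq (nat * nat)).
Hypotheses (vs_vertices : forall P : R * R, is_vertex (newton_polygon R q) P <->
      exists2 v, v \in vs & P = ((v.1)%:R, (v.2)%:R))
  (vs_sorted : sorted (fun a b : nat * nat => (a.1 < b.1)%N && (b.2 < a.2)%N) vs)
  (vs_size : (1 < size vs)%N).
Local Notation vtx k := (nth (0%N, 0%N) vs k).
Let n1 := (vtx 0).1.
Let m1 := (vtx 0).2.
Let n2 := (vtx 1).1.
Let m2 := (vtx 1).2.

Lemma vertex_list_lt i j : (i < j)%N -> (j < size vs)%N ->
  ((vtx i).1 < (vtx j).1)%N && ((vtx j).2 < (vtx i).2)%N.
Proof.
move=> hij hj; apply: (sorted_ltn_nth _ _ vs_sorted) => //; last first.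
  by rewrite inE (ltn_trans hij hj).
by move=> y x z /andP [h1 h2] /andP [h3 h4]; rewrite (ltn_trans h1 h3) (ltn_trans h4 h2).
Qed.

Lemma vertex_list_vertex k : (k < size vs)%N ->
  is_vertex (newton_polygon R q) ((vtx k).1%:R, (vtx k).2%:R).
Proof. by move=> hk; apply/vs_vertices; exists (vtx k) => //; apply: mem_nth. Qed.

Lemma vertex_list_support k : (k < size vs)%N -> q (vtx k).1 (vtx k).2 != 0.
Proof.
move/vertex_list_vertex/np_vertex_support => [i [j [hg /natr_pair_inj [-> ->]]]].
exact: hg.
Qed.

Lemma vertex_list_index (P : R * R) : is_vertex (newton_polygon R q) P ->
  exists2 k, (k < size vs)%N & P = ((vtx k).1%:R, (vtx k).2%:R).
Proof.
by case/vs_vertices => v hv ->; exists (index v vs); rewrite ?index_mem ?nth_index.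
Qed.

(* The support of q lies right of the first vertex: the lowest point of the
   leftmost support column is a vertex, hence is (n_1, m_1). *)
Lemma support_right_of_first k l : q k l != 0 -> (n1 <= k)%N.
Proof.
have hq1 : q n1 m1 != 0 by apply: vertex_list_support; lia.
have [i0 [[j' hj'] hi0]] := @least_nat (fun i => exists j, q i j != 0)
  (ex_intro _ n1 (ex_intro _ m1 hq1)).
have [j0 [hj0 hj0m]] := @least_nat (fun j => q i0 j != 0) (ex_intro _ j' hj').
have hv0 : is_vertex (newton_polygon R q) (i0%:R, j0%:R).
  apply: (@np_vertex_of_faces R _ q 1 0 0 1) => //; rewrite ?ler01 ?lexx //.
  - by rewrite !(mul1r, mul0r, mulr1, subr0) oner_eq0.
  - by move=> i j hij; rewrite !(mul1r, mul0r, addr0) ler_nat; exact: hi0 (ex_intro _ j hij).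
  - move=> i j hij; rewrite !(mul1r, mul0r, addr0, add0r) => /eqP; rewrite eqr_nat.
    by move=> /eqP ei; subst i; rewrite ler_nat; exact: hj0m.
have [[|k'] hk' /natr_pair_inj [ei _]] := vertex_list_index hv0.
  by move=> hkl; rewrite /n1 -ei; exact: hi0 (ex_intro _ l hkl).
have /andP [lt1 _] := vertex_list_lt (ltn0Sn k') hk'.
by move=> hkl; have := hi0 _ (ex_intro _ l hkl); rewrite ei /n1; lia.
Qed.

(* The lowest support
   point for this form, leftmost among ties, is a vertex; it cannot be a later
   vertex (n_k, m_k), k >= 2, since then (n_2, m_2) would lie over a chord. *)
Lemma support_above_first_edge k l : q k l != 0 ->
  ((m1 - m2) * n1 + (n2 - n1) * m1 <= (m1 - m2) * k + (n2 - n1) * l)%N.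
Proof.
set a := (m1 - m2)%N; set b := (n2 - n1)%N.
have /andP [ln12 lm21] := vertex_list_lt (ltn0Sn 0) vs_size.
have hq1 : q n1 m1 != 0 by apply: vertex_list_support; lia.
have hq2 : q n2 m2 != 0 by apply: vertex_list_support.
have e12 : (a * n2 + b * m2 = a * n1 + b * m1)%N by rewrite /a /b; nia.
pose S c := exists i j, q i j != 0 /\ (a * i + b * j)%N = c.
have [c [[ic [jc [hgc ec]]] hcmin]] := @least_nat S (ex_intro _ _ (ex_intro _ n1
  (ex_intro _ m1 (conj hq1 erefl)))).
have [i0 [[j0 [hg0 e0]] hi0min]] := @least_nat (fun i => exists j, q i j != 0 /\
  (a * i + b * j)%N = c) (ex_intro _ ic (ex_intro _ jc (conj hgc ec))).
have hv0 : is_vertex (newton_polygon R q) (i0%:R, j0%:R).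
  apply: (@np_vertex_of_faces R _ q a%:R b%:R 1 0) => //; rewrite ?ler01 ?lexx ?ler0n //.
  - by rewrite mulr0 mulr1 sub0r oppr_eq0 pnatr_eq0 -lt0n /b; lia.
  - move=> i j hij; rewrite -!natrM -!natrD ler_nat e0.
    exact: hcmin (ex_intro _ i (ex_intro _ j (conj hij erefl))).
  - move=> i j hij; rewrite -!natrM -!natrD => /eqP; rewrite eqr_nat e0 => /eqP eij.
    by rewrite !(mul1r, mul0r, addr0) ler_nat; exact: hi0min (ex_intro _ j (conj hij eij)).
move=> hkl; apply: leq_trans (hcmin _ (ex_intro _ k (ex_intro _ l (conj hkl erefl)))).
rewrite leqNgt; apply/negP => hlt.
have [k0 hk0 /natr_pair_inj [ei ej]] := vertex_list_index hv0.
case: k0 hk0 ei ej => [|[|k0]] hk0 ei ej.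
- by move: hlt; rewrite -e0 ei ej ltnn.
- by move: hlt; rewrite -e0 ei ej -/n2 -/m2 e12 ltnn.
have /andP [h1 _] := @vertex_list_lt 1 k0.+2 isT hk0.
apply: (@vertex_not_over_chord R _ q n1 m1 n2 m2 i0 j0 a%:R b%:R); rewrite ?ltr0n //.
- by rewrite /a; lia.
- by rewrite /b; lia.
- exact: (vertex_list_vertex vs_size).
- by rewrite ei.
- by rewrite -!natrM -!natrD e12.
- by rewrite -!natrM -!natrD ltr_nat e0.
Qed.

End VertexList.

Lemma case3_weighted (R : realType) (n1 m1 n2 m2 delta : nat) :
  (n1 < n2)%N -> (m2 < m1)%N ->
  (m1%:R + n1%:R * (m1%:R - m2%:R) / (n2%:R - n1%:R) <= delta%:R :> R) ->
  (n1 * (m1 - m2) + m1 * (n2 - n1) <= delta * (n2 - n1))%N.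
Proof.
move=> ln lm hcase.
have eA : m1%:R - m2%:R = (m1 - m2)%N%:R :> R by rewrite natrB // ltnW.
have eB : n2%:R - n1%:R = (n2 - n1)%N%:R :> R by rewrite natrB // ltnW.
have hb : 0 < (n2 - n1)%N%:R :> R by rewrite ltr0n subn_gt0.
move: hcase; rewrite eA eB -(ler_pM2r hb) mulrDl divfK ?gt_eqF //.
by rewrite addrC -(ler_nat R) !natrD !natrM.
Qed.

Lemma weighted_slope (R : realFieldType) (a b G e i j : nat) : (0 < a)%N ->
  (a * G + b * e <= a * i + b * j)%N ->
  G%:R + b%:R / a%:R * e%:R <= i%:R + b%:R / a%:R * j%:R :> R.
Proof.
move=> ha hw.
have haR : 0 < a%:R :> R by rewrite ltr0n.
have E (x y : R) : a%:R * (x + b%:R / a%:R * y) = a%:R * x + b%:R * y.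
  by field; rewrite gt_eqF.
by rewrite -(ler_pM2l haR) !E -!natrM -!natrD ler_nat.
Qed.

Unset Implicit Arguments. Set Strict Implicit.

Theorem proposition5 (R : realType) (p : nat -> R[i]) (q : ps2 R[i])
    (delta : nat) (vs : seq (nat * nat)) :
  (* p(z) = a_delta z^delta + O(z^(delta+1)), a_delta <> 0, delta >= 1 *)
  (1 <= delta)%N ->
  (forall k, (k < delta)%N -> p k = 0) -> p delta != 0 ->
  (* q(0,0) = 0 and q is not identically zero *)
  q 0%N 0%N = 0 -> (exists i j, q i j != 0) ->
  (* holomorphic germs *)
  convergent1 p -> convergent2 q ->
  (* vs = [(n_1,m_1); ...; (n_s,m_s)] lists the vertices of N(q), n_k increasing, m_k decreasing *)
  (forall P : R * R, is_vertex (newton_polygon R q) P <->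
      exists2 v, v \in vs & P = ((v.1)%:R, (v.2)%:R)) ->
  sorted (fun a b : nat * nat => (a.1 < b.1)%N && (b.2 < a.2)%N) vs ->
  (* Case 3: s > 1 and T_1 <= delta *)
  (1 < size vs)%N ->
  let n1 := (nth (0%N, 0%N) vs 0).1 in let m1 := (nth (0%N, 0%N) vs 0).2 in
  let n2 := (nth (0%N, 0%N) vs 1).1 in let m2 := (nth (0%N, 0%N) vs 1).2 in
  (m1%:R + n1%:R * (m1%:R - m2%:R) / (n2%:R - n1%:R) <= delta%:R :> R) ->
  let gamma := n1 in let d := m1 in
  let l2 : R := (n2%:R - n1%:R) / (m1%:R - m2%:R) in
  forall n : nat, (1 <= n)%N ->
    let gamma_n := (gamma * \sum_(k < n) delta ^ (n.-1 - k) * d ^ k)%N in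
    let Qn := Qiter p q n in
    (* the order of Q^n in z is gamma_n *)
    ((exists j, Qn gamma_n j != 0) /\ (forall i j, Qn i j != 0 -> (gamma_n <= i)%N))
    (* (gamma_n, d^n) is the vertex of N(Q^n) with minimal x-coordinate *)
    /\ (is_vertex (newton_polygon R Qn) (gamma_n%:R, (d ^ n)%:R)
        /\ forall P, is_vertex (newton_polygon R Qn) P ->
             P <> (gamma_n%:R, (d ^ n)%:R) -> gamma_n%:R < P.1)
    (* N(Q^n) is contained in {x >= gamma_n, x + l2 y >= gamma_n + l2 d^n} *)
    /\ (forall P, newton_polygon R Qn P ->
          gamma_n%:R <= P.1 /\ gamma_n%:R + l2 * (d ^ n)%:R <= P.1 + l2 * P.2).
Proof.
move=> hdel hp0 hpd _ _ _ _ hV hsort hsize n1 m1 n2 m2 hcase gamma d l2 n _ gamma_n Qn.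
have /andP [ln12 lm21] := vertex_list_lt hsort (ltn0Sn 0) hsize.
have hq1 : q n1 m1 != 0 by apply: (vertex_list_support hV); lia.
have ha : (0 < m1 - m2)%N by rewrite subn_gt0.
have hb : (0 < n2 - n1)%N by rewrite subn_gt0.
have hd : (0 < m1)%N := leq_ltn_trans (leq0n m2) lm21.
have [Qord Qw Qlow Qlead] := fiber_iter hdel hp0 hpd ha hb hd
  (case3_weighted ln12 lm21 hcase) hq1 (support_right_of_first hV hsort hsize)
  (support_above_first_edge hV hsort hsize) n.
have -> : gamma_n = gamma_seq n1 delta m1 n by rewrite /gamma_n /gamma /d gamma_seq_sum.
have -> : l2 = (n2 - n1)%N%:R / (m1 - m2)%N%:R.
  by rewrite /l2 (natrB _ (ltnW ln12)) (natrB _ (ltnW lm21)).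
split; first by split; [exists (m1 ^ n)%N | move=> i j /Qord; rewrite mul1n mul0n addn0].
apply: np_left_vertex_face => //; first by rewrite divr_ge0 ?ler0n.
- by move=> i j /Qord; rewrite mul1n mul0n addn0.
- by move=> i j /Qw; apply: weighted_slope.
Qed.
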